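(* Let $b,\ell\ge1$, $s=2^b$ and $m=(s/2)^\ell=2^{(b-1)\ell}$. Let $\mathcal F_{b,\ell}$ be the family of all graphs obtained from $G_{b,\ell}$ by deleting an arbitrary subset of the level-$\ell$ vertices $\{v_{\ell,\vec j}:\vec j\in[0,s-1]^\ell\}$ together with their incident edges. Then any distance labeling scheme for $\mathcal F_{b,\ell}$ assigns, for some graph in $\mathcal F_{b,\ell}$, to some vertex a label of at least $\textsc{SumIndex}(m)-b\ell$ bits.
   Context: Notation $[a,b]=\{a,\dots,b\}$. Fix $b,\ell\ge1$, $s=2^b$, $A=3\ell s^2$. The weighted graph $H_{b,\ell}$ has vertex set $\bigcup_{i=0}^{2\ell}V_i$, $V_i=\{v_{i,\vec j}:\vec j\in[0,s-1]^\ell\}$; for $i\in[0,2\ell-1]$ let $c(i)=i+1$ if $i<\ell$, $c(i)=2\ell-i$ if $i\ge\ell$; $v_{i,\vec j}$ and $v_{i+1,\vec j'}$ are adjacent iff $j_k=j'_k$ for all $k\ne c(i)$, with weight $A+(j_{c(i)}-j'_{c(i)})^2$; no other edges. The unweighted graph $G_{b,\ell}$: each $v\in V_i$ is kept and gets attached (root adjacent to $v$) a complete binary tree $T^{\mathrm{in}}_v$ of depth $b$ (only if $i>0$) with leaves $v^{\mathrm{in}}_u$ for the neighbors $u\in V_{i-1}$, and a complete binary tree $T^{\mathrm{out}}_v$ of depth $b$ (only if $i<2\ell$) with leaves $v^{\mathrm{out}}_u$ for the neighbors $u\in V_{i+1}$; trees disjoint; for each edge $e=\{u,v\}$ of $H_{b,\ell}$,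 $u\in V_i,v\in V_{i+1}$, the leaves $u^{\mathrm{out}}_v$ and $v^{\mathrm{in}}_u$ are joined by a path of length $w(e)-2b-2$ through new vertices. A distance labeling scheme for a family $\mathcal F$ of graphs consists of a fixed decoding function $f$ and, for each $G\in\mathcal F$, an assignment of binary strings $\mathsf{label}(u)$ to vertices $u\in V(G)$, such that $f(\mathsf{label}(u),\mathsf{label}(v))=\mathrm{dist}_G(u,v)$ for all $u,v$. Sum-Index problem on $\mathbb Z_n$: a string $S=S_0\dots S_{n-1}\in\{0,1\}^n$ is known to both Alice and Bob; Alice also holds $a\in[0,n-1]$, Bob holds $b'\in[0,n-1]$; each simultaneously sends one message to a referee, who must output $S_{(a+b')\bmod n}$ from the two messages alone. $\textsc{SumIndex}(n)$ denotes the minimum, over deterministic such protocols, of the maximum (over inputs and both players) message length in bits. *)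

From Stdlib Require Import ClassicalEpsilon.
From mathcomp Require Import all_boot.

Set Implicit Arguments.
Unset Strict Implicit.
Unset Printing Implicit Defensive.

Inductive reach {V : Type} (adj : V -> V -> Prop) : nat -> V -> V -> Prop :=
| reach0 x : reach adj 0 x x
| reachS k x w y : adj x w -> reach adj k w y -> reach adj k.+1 x y.

(* dist_is adj x y d : d is the graph distance from x to y;
   d = None encodes distance +infinity (x, y in different components). *)
Definition dist_is {V : Type} (adj : V -> V -> Prop) (x y : V)
  (d : option nat) : Prop :=
  match d with
  | Some n => reach adj n x y /\ (forall k, reach adj k x y -> n <= k)
  | None => forall k, ~ reach adj k x y
  end.

Definition sz (b : nat) : nat := 2 ^ b.
Definition AA (b l : nat) : nat := 3 * l * (sz b) ^ 2.

(* j in [0,s-1]^l, represented as a list of length l;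
   coordinate k in [1,l] is stored at (0-based) position k-1. *)
Definition is_vec (b l : nat) (j : seq nat) : bool :=
  (size j == l) && all (fun x => x < sz b) j.

Definition cc (l i : nat) : nat := if i < l then i + 1 else 2 * l - i.
(* 0-based list position of coordinate c(i) *)
Definition cpos (l i : nat) : nat := (cc l i).-1.

Definition absdiff (x y : nat) : nat := (x - y) + (y - x).

(* v_{i,j} ~ v_{i+1,j'} in H_{b,l} *)
Definition H_adj (b l i : nat) (j j' : seq nat) : Prop :=
  i < 2 * l /\ is_vec b l j /\ is_vec b l j' /\
  (forall k, 1 <= k <= l -> k != cc l i -> nth 0 j k.-1 = nth 0 j' k.-1).

Definition H_w (b l i : nat) (j j' : seq nat) : nat :=
  AA b l + (absdiff (nth 0 j (cpos l i)) (nth 0 j' (cpos l i))) ^ 2.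

(* Vertices:
   - Main i j            : v_{i,j}
   - TIn i j d p         : node of T^in_{v_{i,j}} at depth d (0 = root),
                           position p < 2^d; leaves have d = b
   - TOut i j d p        : node of T^out_{v_{i,j}}, same convention
   - PathV i j t k       : k-th vertex (0 < k < path length) of the path
                           subdividing the H-edge from v_{i,j} to
                           v_{i+1, j[c(i) := t]}. *)
Inductive vtx : Type :=
| Main of nat & seq nat
| TIn of nat & seq nat & nat & nat
| TOut of nat & seq nat & nat & nat
| PathV of nat & seq nat & nat & nat.

(* The out-neighbour of v_{i,j} in V_{i+1} attached to leaf t of T^out,
   and the in-neighbour of v_{i,j} in V_{i-1} attached to leaf t of T^in:
   the neighbour whose c-coordinate equals t. *)
Definition out_nbr (l i : nat) (j : seq nat) (t : nat) : seq nat :=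
  set_nth 0 j (cpos l i) t.
Definition in_nbr (l i : nat) (j : seq nat) (t : nat) : seq nat :=
  set_nth 0 j (cpos l i.-1) t.

(* length of the path replacing the H-edge from v_{i,j} to v_{i+1,j'} *)
Definition plen (b l i : nat) (j j' : seq nat) : nat :=
  H_w b l i j j' - 2 * b - 2.

(* k-th vertex (0 <= k <= plen) of the path for edge (v_{i,j}, out_nbr t):
   endpoints are the leaves u^out_v and v^in_u. *)
Definition pnode (b l i : nat) (j : seq nat) (t k : nat) : vtx :=
  let j' := out_nbr l i j t in
  if k == 0 then TOut i j b t
  else if k == plen b l i j j' then TIn i.+1 j' b (nth 0 j (cpos l i))
  else PathV i j t k.

Definition valid (b l : nat) (x : vtx) : Prop :=
  match x with
  | Main i j => i <= 2 * l /\ is_vec b l j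
  | TIn i j d p => 0 < i <= 2 * l /\ is_vec b l j /\ d <= b /\ p < 2 ^ d
  | TOut i j d p => i < 2 * l /\ is_vec b l j /\ d <= b /\ p < 2 ^ d
  | PathV i j t k =>
      i < 2 * l /\ is_vec b l j /\ t < sz b /\
      0 < k < plen b l i j (out_nbr l i j t)
  end.

Inductive gedge (b l : nat) : vtx -> vtx -> Prop :=
| e_root_in i j : gedge b l (Main i j) (TIn i j 0 0)
| e_root_out i j : gedge b l (Main i j) (TOut i j 0 0)
| e_in_l i j d p : d < b -> gedge b l (TIn i j d p) (TIn i j d.+1 p.*2)
| e_in_r i j d p : d < b -> gedge b l (TIn i j d p) (TIn i j d.+1 p.*2.+1)
| e_out_l i j d p : d < b -> gedge b l (TOut i j d p) (TOut i j d.+1 p.*2)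
| e_out_r i j d p : d < b -> gedge b l (TOut i j d p) (TOut i j d.+1 p.*2.+1)
| e_path i j t k :
    i < 2 * l -> is_vec b l j -> t < sz b ->
    k < plen b l i j (out_nbr l i j t) ->
    gedge b l (pnode b l i j t k) (pnode b l i j t k.+1).

Definition G_adj (b l : nat) (x y : vtx) : Prop :=
  valid b l x /\ valid b l y /\ (gedge b l x y \/ gedge b l y x).

(* D : seq nat -> bool describes the deleted set {v_{l,j} : D j}. *)
Definition present (b l : nat) (D : seq nat -> bool) (x : vtx) : Prop :=
  valid b l x /\
  match x with
  | Main i j => ~~ ((i == l) && D j)
  | _ => true
  end.

Definition GD_adj (b l : nat) (D : seq nat -> bool) (x y : vtx) : Prop :=
  G_adj b l x y /\ present b l D x /\ present b l D y.

Definition dls_for_F (b l : nat) (f : seq bool -> seq bool -> option nat)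
  (L : (seq nat -> bool) -> vtx -> seq bool) : Prop :=
  forall D x y, present b l D x -> present b l D y ->
    dist_is (GD_adj b l D) x y (f (L D x) (L D y)).

(* Alice: (S, a) |-> message; Bob: (S, b') |-> message;
   referee: (msgA, msgB) |-> bit. *)
Definition SI_correct (n : nat) (MA MB : seq bool -> nat -> seq bool)
  (R : seq bool -> seq bool -> bool) : Prop :=
  forall S a b', size S = n -> a < n -> b' < n ->
    R (MA S a) (MB S b') = nth false S ((a + b') %% n).

Definition SI_cost_le (n : nat) (MA MB : seq bool -> nat -> seq bool)
  (k : nat) : Prop :=
  forall S a, size S = n -> a < n -> size (MA S a) <= k /\ size (MB S a) <= k.

Definition SumIndex_le (n k : nat) : Prop :=
  exists MA MB R, SI_correct n MA MB R /\ SI_cost_le n MA MB k.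

Definition SumIndex_leb (n k : nat) : bool :=
  if excluded_middle_informative (SumIndex_le n k) then true else false.

Lemma SumIndex_le_exists (n : nat) : exists k, SumIndex_leb n k.
Proof.
exists (n + n); rewrite /SumIndex_leb.
case: excluded_middle_informative => // H; exfalso; apply: H.
pose MA := fun (S : seq bool) (a : nat) => nseq a true ++ false :: S.
pose MB := fun (S : seq bool) (b' : nat) => nseq b' true.
pose R := fun ma mb : seq bool =>
  let a := index false ma in let S := drop a.+1 ma in
  nth false S ((a + size mb) %% size S).
exists MA, MB, R; split.
- move=> S a b' hS ha hb; rewrite /R /MA /MB.
  have hi : index false (nseq a true ++ false :: S) = a.
    rewrite index_cat size_nseq /=.
    have -> : (false \in nseq a true) = false by rewrite mem_nseq andbF.
    by rewrite addn0.
  rewrite hi drop_cat size_nseq ltnNge leqnSn /= subSnn /= drop0 size_nseq hS.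
  done.
- move=> S a hS ha; rewrite /MA /MB size_cat !size_nseq /= hS; split.
  + by rewrite addnS -addSn leq_add2r.
  + by apply: leq_trans (leq_addl _ _); apply: ltnW.
Qed.

Definition SumIndex (n : nat) : nat := ex_minn (SumIndex_le_exists n).

(* Write h = s/2, so that m = h^l, and identify a number a < m with the
   vector P(a) = 2 (base-h digits of a), a vertex of V_0 and of V_{2l}.
   Between P(a) in V_0 and P(b') in V_{2l} runs a canonical path of
   H_{b,l} moving each coordinate first to the midpoint and then to its
   final value; its vertex in V_l is the digit-wise sum of a and b', which
   represents (a + b') mod m.  The core of the proof: in the graph G_D of
   F_{b,l}, the distance between v_{0,P(a)} and v_{2l,P(b')} equals the
   length T(a, b') of the canonical path when its middle vertex is kept,
   and exceeds it when that vertex is deleted.  The upper bound walks along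
   the path.  The lower bounds use a potential on G_D that drops by at most
   1 per edge; it is built from an estimate on H of the remaining distance
   to P(b') (a convexity bound on squared coordinate steps, the base weight
   A absorbing the trees), raised by 1 along the first half of the
   canonical path when the middle vertex is missing.

   For the reduction, a string S selects the graph deleting the level-l
   vertices whose position carries a 0; Alice and Bob send their number
   ((b-1) l bits) together with the label of their vertex, and the referee
   compares the decoded distance with T(a, b').  Hence
   SumIndex(m) <= (b-1) l + (maximal label length), which is the theorem. *)

From Stdlib Require Import Classical ClassicalEpsilon.
From mathcomp Require Import all_boot zify.

Set Implicit Arguments.
Unset Strict Implicit.
Unset Printing Implicit Defensive.

Section Walks.
Variables (V : Type) (adj : V -> V -> Prop).

Lemma reach_cat k k' x y z :
  reach adj k x y -> reach adj k' y z -> reach adj (k + k') x z.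
Proof.
elim=> [//|n u v w huv _ IH] hwz.
by rewrite addSn; apply: (reachS huv); apply: IH.
Qed.

Lemma reach_edge x y : adj x y -> reach adj 1 x y.
Proof. by move=> hxy; apply: (reachS hxy); apply: reach0. Qed.

Lemma reach_sym :
  (forall x y, adj x y -> adj y x) ->
  forall k x y, reach adj k x y -> reach adj k y x.
Proof.
move=> hsym k x y; elim=> [u|n u v w huv _ IH]; first exact: reach0.
by rewrite -addn1; apply: reach_cat IH (reach_edge (hsym _ _ huv)).
Qed.

(* A potential that decreases by at most 1 along every edge bounds the
   length of every walk from below: the tool for all distance lower
   bounds of this file. *)
Lemma reach_potential (phi : V -> nat) :
  (forall x y, adj x y -> phi x <= phi y + 1) ->
  forall k x y, reach adj k x y -> phi x <= phi y + k.
Proof.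
move=> hphi k x y; elim=> [u|n u v w huv _ IH]; first by rewrite addn0.
by have := hphi _ _ huv; lia.
Qed.

Lemma tree_descent (node : nat -> nat -> V) (b t : nat) :
  (forall d p, d < b -> p < 2 ^ d.+1 -> adj (node d (p %/ 2)) (node d.+1 p)) ->
  t < 2 ^ b -> forall n d, d + n = b -> reach adj n (node d (t %/ 2 ^ n)) (node b t).
Proof.
move=> hchild ht; elim=> [|n IH] d hdn.
  by rewrite expn0 divn1 -hdn addn0; apply: reach0.
have hq : t %/ 2 ^ n < 2 ^ d.+1.
  by rewrite ltn_divLR ?expn_gt0 // -expnD; rewrite addSnnS hdn.
rewrite expnSr divnMA; apply: (reachS (hchild _ _ _ hq)); first lia.
by apply: IH; rewrite addSnnS.
Qed.

End Walks.

Lemma GD_adj_sym b l D x y : GD_adj b l D x y -> GD_adj b l D y x.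
Proof. by case=> [[hx [hy he]] [px py]]; do !split => //; tauto. Qed.

Lemma absdiff_lt x y s : x < s -> y < s -> absdiff x y < s.
Proof. rewrite /absdiff; lia. Qed.

Lemma absdiff_sqr x y : absdiff x y * absdiff x y + 2 * (x * y) = x * x + y * y.
Proof. by rewrite /absdiff; case: (leqP x y) => hxy; nia. Qed.

Lemma two_steps_cost x y q :
  absdiff x q ^ 2 %/ 2 <= absdiff y q ^ 2 + absdiff x y ^ 2.
Proof.
rewrite -!mulnn.
set D := absdiff x q; set U := absdiff y q; set V := absdiff x y.
have hD : D <= U + V by rewrite /D /U /V /absdiff; lia.
have hDD : D * D <= (U + V) * (U + V) by apply: leq_mul.
have hUV : (U + V) * (U + V) <= 2 * (U * U + V * V) by case: (leqP U V); nia.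
lia.
Qed.

(* The exact cost of two steps from 2a to 2c through y (parallelogram law). *)
Lemma two_steps_exact a c y :
  absdiff y (2 * c) ^ 2 + absdiff (2 * a) y ^ 2 =
  2 * absdiff a c ^ 2 + 2 * absdiff y (a + c) ^ 2.
Proof.
have := absdiff_sqr y (2 * c); have := absdiff_sqr (2 * a) y.
have := absdiff_sqr a c; have := absdiff_sqr y (a + c).
by rewrite -!mulnn; nia.
Qed.

Lemma half_sqr_double a c : absdiff (2 * a) (2 * c) ^ 2 %/ 2 = 2 * absdiff a c ^ 2.
Proof.
have -> : absdiff (2 * a) (2 * c) = 2 * absdiff a c by rewrite /absdiff; lia.
by rewrite expnMn -mulnA mulKn.
Qed.

Lemma two_steps_midpoint a c :
  absdiff (2 * a) (2 * c) ^ 2 %/ 2 =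
  absdiff (a + c) (2 * c) ^ 2 + absdiff (2 * a) (a + c) ^ 2.
Proof.
have hW : absdiff (a + c) (a + c) = 0 by rewrite /absdiff subnn.
by rewrite two_steps_exact half_sqr_double hW muln0 addn0.
Qed.

Lemma two_steps_off_midpoint a c y : y != a + c ->
  absdiff (2 * a) (2 * c) ^ 2 %/ 2 + 2 <=
  absdiff y (2 * c) ^ 2 + absdiff (2 * a) y ^ 2.
Proof.
move=> hy; rewrite two_steps_exact half_sqr_double leq_add2l.
have : 0 < absdiff y (a + c) by move: hy; rewrite /absdiff; lia.
by rewrite -mulnn; nia.
Qed.

Lemma cposE l i : cpos l i = if i < l then i else 2 * l - i - 1.
Proof. rewrite /cpos /cc; case: ifP; lia. Qed.

Lemma cpos_lt l i : i < 2 * l -> cpos l i < l.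
Proof. rewrite cposE; case: ifP; lia. Qed.

Lemma vec_nth b l j k : is_vec b l j -> k < l -> nth 0 j k < sz b.
Proof. by case/andP=> /eqP hs /(all_nthP 0) hall hk; apply: hall; rewrite hs. Qed.

Lemma vec_mk b l j : size j = l -> (forall k, k < l -> nth 0 j k < sz b) -> is_vec b l j.
Proof.
move=> hs hall; apply/andP; split; first by rewrite hs.
by apply/(all_nthP 0) => k; rewrite hs; apply: hall.
Qed.

Lemma out_nbr_vec b l i j t :
  i < 2 * l -> is_vec b l j -> t < sz b -> is_vec b l (out_nbr l i j t).
Proof.
move=> hi hj ht; have hc := cpos_lt hi.
have hs : size j = l by case/andP: hj => /eqP.
apply: vec_mk => [|k hk]; first by rewrite /out_nbr size_set_nth hs; lia.
rewrite /out_nbr nth_set_nth /=; case: (k == cpos l i) => //.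
exact: vec_nth hj hk.
Qed.

Lemma H_w_out_nbr b l i j t :
  H_w b l i j (out_nbr l i j t) = AA b l + absdiff (nth 0 j (cpos l i)) t ^ 2.
Proof. by rewrite /H_w /out_nbr nth_set_nth /= eqxx. Qed.

(* Every edge of H_{b,l} is replaced in G_D by a walk of the same length
   (out-tree, subdivided path, in-tree), as long as its ends are kept. *)
Section GWalks.
Variables (b l : nat) (D : seq nat -> bool).
Local Notation adjD := (GD_adj b l D).

Lemma pnode_valid i j t k : i < 2 * l -> is_vec b l j -> t < sz b ->
  k <= plen b l i j (out_nbr l i j t) -> valid b l (pnode b l i j t k).
Proof.
move=> hi hj ht hk; rewrite /pnode.
case: eqP => [_|k0] /=; first by rewrite hi hj ht leqnn.
case: eqP => [_|kp] /=; last by do !split => //; move: hk k0 kp; lia.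
split; first lia.
by split; [exact: out_nbr_vec | split; [|exact: vec_nth hj (cpos_lt hi)]].
Qed.

Lemma pnode_present i j t k : i < 2 * l -> is_vec b l j -> t < sz b ->
  k <= plen b l i j (out_nbr l i j t) -> present b l D (pnode b l i j t k).
Proof.
move=> hi hj ht hk; have hv := pnode_valid hi hj ht hk.
by split=> //; move: hv; rewrite /pnode; case: eqP => _ //; case: eqP.
Qed.

Lemma path_walk i j t : i < 2 * l -> is_vec b l j -> t < sz b ->
  forall n k, k + n = plen b l i j (out_nbr l i j t) ->
  reach adjD n (pnode b l i j t k) (pnode b l i j t (plen b l i j (out_nbr l i j t))).
Proof.
move=> hi hj ht; elim=> [|n IH] k hk.
  by rewrite -hk addn0; apply: reach0.
apply: (reachS (w := pnode b l i j t k.+1)); last by apply: IH; lia.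
split; [split; [|split] | split]; try (apply: pnode_valid || apply: pnode_present; lia).
by left; apply: e_path => //; lia.
Qed.

Lemma tout_walk i j t : i < 2 * l -> is_vec b l j -> t < 2 ^ b ->
  reach adjD b (TOut i j 0 0) (TOut i j b t).
Proof.
move=> hi hj ht; have := tree_descent (node := TOut i j) _ ht (add0n b).
rewrite divn_small //; apply=> d p hd hp.
have hp2 : p %/ 2 < 2 ^ d by rewrite ltn_divLR // -expnSr.
do !split => //; try lia; left.
by rewrite -{2}(odd_double_half p) -divn2; case: (odd p); [apply: e_out_r | apply: e_out_l].
Qed.

Lemma tin_walk i j t : 0 < i <= 2 * l -> is_vec b l j -> t < 2 ^ b ->
  reach adjD b (TIn i j 0 0) (TIn i j b t).
Proof.
move=> hi hj ht; have := tree_descent (node := TIn i j) _ ht (add0n b).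
rewrite divn_small //; apply=> d p hd hp.
have hp2 : p %/ 2 < 2 ^ d by rewrite ltn_divLR // -expnSr.
do !split => //; try lia; left.
by rewrite -{2}(odd_double_half p) -divn2; case: (odd p); [apply: e_in_r | apply: e_in_l].
Qed.

Lemma H_edge_walk i j t : i < 2 * l -> is_vec b l j -> t < sz b ->
  2 * b + 2 < H_w b l i j (out_nbr l i j t) ->
  present b l D (Main i j) -> present b l D (Main i.+1 (out_nbr l i j t)) ->
  reach adjD (H_w b l i j (out_nbr l i j t)) (Main i j) (Main i.+1 (out_nbr l i j t)).
Proof.
move=> hi hj ht hw pu pv; set j' := out_nbr l i j t in hw pv *.
have hj' : is_vec b l j' := out_nbr_vec hi hj ht.
set p := nth 0 j (cpos l i).
have hp : p < 2 ^ b := vec_nth hj (cpos_lt hi).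
have start : adjD (Main i j) (TOut i j 0 0).
  by case: pu => [[hi' _] hD]; do !split => //; left; apply: e_root_out.
have finish : adjD (TIn i.+1 j' 0 0) (Main i.+1 j').
  apply: GD_adj_sym; case: pv => [[hi' _] hD].
  by do !split => //; try lia; left; apply: e_root_in.
have down_out := tout_walk hi hj ht.
have across := path_walk hi hj ht (add0n (plen b l i j j')).
have up_in : reach adjD b (TIn i.+1 j' b p) (TIn i.+1 j' 0 0).
  by apply: reach_sym (@GD_adj_sym b l D) _ _ _ (tin_walk _ hj' hp); lia.
have E : pnode b l i j t (plen b l i j j') = TIn i.+1 j' b p.
  by rewrite /pnode ifF ?eqxx //; apply/eqP; rewrite /plen; lia.
rewrite E in across.
have := reach_cat (reachS start down_out)
          (reach_cat across (reach_cat up_in (reach_edge finish))).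
by have -> : b.+1 + (plen b l i j j' + (b + 1)) = H_w b l i j j' by rewrite /plen; lia.
Qed.

End GWalks.

(* A vertex v_{i,j} gets
   the value mn i j, its in-tree is calibrated on bi i j and its out-tree
   on bo i j; a path vertex takes the larger of the two values propagated
   from the ends of its path. *)
Definition Phi (b l : nat) (mn bi bo : nat -> seq nat -> nat) (x : vtx) : nat :=
  match x with
  | Main i j => mn i j
  | TIn i j d p => bi i j + d + 1
  | TOut i j d p => bo i j - (d + 1)
  | PathV i j t k =>
      maxn (bo i j - (b + 1) - k)
           (bi i.+1 (out_nbr l i j t) + (b + 1) - (plen b l i j (out_nbr l i j t) - k))
  end.

(* Compatibility of bi and bo with the weight of every H-edge: along the
   edge the potential drops by at most its weight, with room for the two
   trees of depth b. *)
Definition edge_compatible (b l : nat) (bi bo : nat -> seq nat -> nat) : Prop :=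
  forall i j t, i < 2 * l -> is_vec b l j -> t < sz b ->
    let j' := out_nbr l i j t in
    b + 1 <= bo i j /\ 2 * b + 2 <= H_w b l i j j' /\
    bo i j <= bi i.+1 j' + H_w b l i j j' /\
    bi i.+1 j' + 4 * b + 4 <= bo i j + H_w b l i j j'.

Section Potential.
Variables (b l : nat) (D : seq nat -> bool) (mn bi bo : nat -> seq nat -> nat).
Hypothesis compat : edge_compatible b l bi bo.

Lemma Phi_pnode i j t k : i < 2 * l -> is_vec b l j -> t < sz b ->
  k <= plen b l i j (out_nbr l i j t) ->
  Phi b l mn bi bo (pnode b l i j t k) =
  maxn (bo i j - (b + 1) - k)
       (bi i.+1 (out_nbr l i j t) + (b + 1) - (plen b l i j (out_nbr l i j t) - k)).
Proof.
move=> hi hj ht hk; have [h1 [h2 [h3 h4]]] := compat hi hj ht.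
rewrite /pnode; case: eqP => [->|k0] /=; first by move: hk; rewrite /plen; lia.
by case: eqP => [->|kp] //=; move: hk; rewrite /plen; lia.
Qed.

Lemma Phi_lipschitz :
  (forall i j, present b l D (Main i j) -> bi i j = mn i j /\ bo i j = mn i j) ->
  forall x y, GD_adj b l D x y -> Phi b l mn bi bo x <= Phi b l mn bi bo y + 1.
Proof.
move=> hmain.
suff H : forall x y, gedge b l x y -> present b l D x -> present b l D y ->
    Phi b l mn bi bo x <= Phi b l mn bi bo y + 1 /\
    Phi b l mn bi bo y <= Phi b l mn bi bo x + 1.
  by move=> x y [[_ [_ [he|he]]] [px py]]; [case: (H _ _ he px py) | case: (H _ _ he py px)].
move=> x y; case=> /=; try by move=> *; lia.
- by move=> i j px _; have [-> _] := hmain _ _ px; lia.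
- by move=> i j px _; have [_ ->] := hmain _ _ px; lia.
- move=> i j t k hi hj ht hk _ _.
  by rewrite (Phi_pnode hi hj ht (ltnW hk)) (Phi_pnode hi hj ht hk); lia.
Qed.

End Potential.

(* A potential on H_{b,l} estimating the distance to a target vector Q of
   V_{2l}, coordinate by coordinate.  With z = |j_k - Q_k|, coordinate k of
   a vertex of V_i costs z^2 if it will be changed exactly once more
   (k < min(i, 2l - i)), z^2 / 2 if it still has to be changed twice (first
   half, i < l), and the penalty s^2 unless it is on target if it is never
   changed again (second half). *)
Definition coord_cost (b l i k z : nat) : nat :=
  if k < minn i (2 * l - i) then z ^ 2
  else if i < l then z ^ 2 %/ 2 else sz b ^ 2 * (z != 0).

Definition coord_pot (b l : nat) (Q : nat -> nat) (i : nat) (j : seq nat) : nat :=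
  \sum_(k < l) coord_cost b l i k (absdiff (nth 0 j k) (Q k)).

Definition dist_est (b l : nat) (Q : nat -> nat) (i : nat) (j : seq nat) : nat :=
  (2 * l - i) * AA b l + coord_pot b l Q i j.

Lemma coord_cost_once b l i k z : k < minn i (2 * l - i) -> coord_cost b l i k z = z ^ 2.
Proof. by rewrite /coord_cost => ->. Qed.

Lemma coord_cost_twice b l i k z :
  ~~ (k < minn i (2 * l - i)) -> i < l -> coord_cost b l i k z = z ^ 2 %/ 2.
Proof. by rewrite /coord_cost => /negbTE -> ->. Qed.

Lemma coord_cost_settled b l i k z :
  ~~ (k < minn i (2 * l - i)) -> ~~ (i < l) -> coord_cost b l i k z = sz b ^ 2 * (z != 0).
Proof. by rewrite /coord_cost => /negbTE -> /negbTE ->. Qed.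

Lemma coord_cost_step b l i k z : i < 2 * l -> k < l -> k != cpos l i ->
  coord_cost b l i k z = coord_cost b l i.+1 k z.
Proof.
rewrite cposE => hi hk /eqP hc.
case: (ltnP k (minn i (2 * l - i))) => h1.
  by rewrite !coord_cost_once //; move: hc; case: ifP; lia.
case: (ltnP i l) => h2.
  by rewrite !coord_cost_twice -?ltnNge //; move: hc; case: ifP; lia.
by rewrite !coord_cost_settled -?ltnNge //; move: hc; case: ifP; lia.
Qed.

Lemma coord_cost_le b l i k z : z < sz b -> coord_cost b l i k z <= sz b ^ 2.
Proof.
move=> hz; rewrite /coord_cost -!mulnn.
have hzz : z * z <= sz b * sz b by apply: leq_mul; apply: ltnW.
case: ifP => _ //; case: ifP => _; first exact: leq_trans (leq_div _ _) hzz.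
by case: (z != 0); lia.
Qed.

Lemma coord_pot_le b l Q i j : is_vec b l j -> (forall k, k < l -> Q k < sz b) ->
  coord_pot b l Q i j <= l * sz b ^ 2.
Proof.
move=> hj hQ; rewrite /coord_pot -[l in l * _]card_ord -sum_nat_const.
apply: leq_sum => k _; apply/coord_cost_le/absdiff_lt; last exact: hQ.
exact: vec_nth hj (ltn_ord k).
Qed.

Lemma sum_update n c (F G : nat -> nat) : c < n ->
  (forall k, k < n -> k != c -> F k = G k) ->
  \sum_(k < n) F k + G c = \sum_(k < n) G k + F c.
Proof.
move=> hc hFG.
rewrite (bigD1 (Ordinal hc)) // [\sum_(k < n) G k](bigD1 (Ordinal hc)) //=.
rewrite (eq_bigr (fun k : 'I_n => G k)); first lia.
by move=> k hk; apply: hFG; [exact: ltn_ord | apply: contra hk => /eqP e; apply/eqP/val_inj].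
Qed.

Lemma coord_pot_step b l Q i j t : i < 2 * l ->
  coord_pot b l Q i j + coord_cost b l i.+1 (cpos l i) (absdiff t (Q (cpos l i))) =
  coord_pot b l Q i.+1 (out_nbr l i j t) +
  coord_cost b l i (cpos l i) (absdiff (nth 0 j (cpos l i)) (Q (cpos l i))).
Proof.
move=> hi; rewrite /coord_pot.
have := @sum_update l (cpos l i) (fun k => coord_cost b l i k (absdiff (nth 0 j k) (Q k)))
  (fun k => coord_cost b l i.+1 k (absdiff (nth 0 (out_nbr l i j t) k) (Q k))) (cpos_lt hi).
rewrite /out_nbr nth_set_nth /= eqxx; apply=> k hk hkc.
by rewrite nth_set_nth /= (negbTE hkc); apply: coord_cost_step.
Qed.

Lemma coord_pot_edge b l Q i j t : i < 2 * l -> is_vec b l j -> t < sz b ->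
  (forall k, k < l -> Q k < sz b) ->
  coord_pot b l Q i j <=
  coord_pot b l Q i.+1 (out_nbr l i j t) + absdiff (nth 0 j (cpos l i)) t ^ 2.
Proof.
move=> hi hj ht hQ; have := coord_pot_step b Q j t hi.
have hc := cpos_lt hi; set c := cpos l i in hc *.
set x := nth 0 j c; set q := Q c.
have hx : x < sz b := vec_nth hj hc.
have hq : q < sz b := hQ c hc.
suff : coord_cost b l i c (absdiff x q) <= coord_cost b l i.+1 c (absdiff t q) + absdiff x t ^ 2.
  by lia.
rewrite /c cposE; case: (ltnP i l) => h.
  by rewrite coord_cost_twice ?coord_cost_once -?ltnNge ?two_steps_cost //; lia.
rewrite coord_cost_once ?coord_cost_settled -?ltnNge; try lia.
case: (eqVneq t q) => [->|htq]; first by rewrite /absdiff subnn eqxx muln0.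
have -> : (absdiff t q != 0) = true by apply/negP => /eqP; move: htq => /eqP; rewrite /absdiff; lia.
rewrite muln1 -!mulnn.
have : absdiff x q * absdiff x q <= sz b * sz b by apply: leq_mul; apply/ltnW/absdiff_lt.
lia.
Qed.

Lemma weight_facts b l : 1 <= l ->
  b + 1 <= sz b ^ 2 /\ AA b l = 3 * (l * sz b ^ 2) /\ sz b ^ 2 <= l * sz b ^ 2.
Proof.
move=> hl; have hs : b < sz b by apply: ltn_expl.
split; first by rewrite -mulnn; nia.
by rewrite /AA mulnA leq_pmull.
Qed.

Lemma levels_left_step l i A : i < 2 * l -> (2 * l - i) * A = A + (2 * l - i.+1) * A.
Proof. by move=> hi; rewrite -mulSn; congr (_ * _); lia. Qed.

(* The base weight A = 3 l s^2 absorbs all the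
   slack required by edge_compatible. *)
Lemma dist_est_compatible b l Q (e_in e_out : nat -> seq nat -> nat) :
  1 <= l -> (forall k, k < l -> Q k < sz b) ->
  (forall i j, e_in i j <= 1) -> (forall i j, e_out i j <= 1) ->
  (forall i j t, i < 2 * l -> is_vec b l j -> t < sz b ->
     coord_pot b l Q i j + e_out i j <=
     coord_pot b l Q i.+1 (out_nbr l i j t) + absdiff (nth 0 j (cpos l i)) t ^ 2 +
     e_in i.+1 (out_nbr l i j t)) ->
  edge_compatible b l (fun i j => dist_est b l Q i j + e_in i j)
                      (fun i j => dist_est b l Q i j + e_out i j).
Proof.
move=> hl hQ hin hout hedge i j t hi hj ht /=.
have [f1 [f2 f3]] := weight_facts b hl.
have gb := coord_pot_le i.+1 (out_nbr_vec hi hj ht) hQ.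
have := hedge i j t hi hj ht; have := hout i j; have := hin i.+1 (out_nbr l i j t).
rewrite H_w_out_nbr /dist_est (levels_left_step (AA b l) hi).
move: f1 f2 f3 gb; set A := AA b l; set Z := l * sz b ^ 2.
set Y := (2 * l - i.+1) * A.
set g1 := coord_pot b l Q i j; set g2 := coord_pot b l Q i.+1 (out_nbr l i j t).
set dd := absdiff _ t ^ 2.
lia.
Qed.

(* The canonical path from P(alpha) = 2 alpha in V_0 to P(beta) = 2 beta in
   V_{2l}: during the first half coordinate i moves to the midpoint
   alpha_i + beta_i, during the second half coordinate 2l - i - 1 moves on
   to 2 beta.  Its middle vertex in V_l is alpha + beta. *)
Definition canon_coord (l : nat) (da db : nat -> nat) (i k : nat) : nat :=
  if k < minn i (2 * l - i) then da k + db k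
  else if i < l then 2 * da k else 2 * db k.

Definition canon (l : nat) (da db : nat -> nat) (i : nat) : seq nat :=
  mkseq (canon_coord l da db i) l.

Definition double (db : nat -> nat) (k : nat) : nat := 2 * db k.

Lemma nth_canon l da db i k : k < l -> nth 0 (canon l da db i) k = canon_coord l da db i k.
Proof. exact: nth_mkseq. Qed.

Lemma canon_vec b l da db h i : sz b = 2 * h ->
  (forall k, da k < h) -> (forall k, db k < h) -> is_vec b l (canon l da db i).
Proof.
move=> hs hda hdb; apply: vec_mk => [|k hk]; first by rewrite size_mkseq.
rewrite nth_canon // /canon_coord hs; have := hda k; have := hdb k.
by case: ifP => _; [lia | case: ifP => _; lia].
Qed.

Lemma double_lt b db h k : sz b = 2 * h -> (forall k, db k < h) -> double db k < sz b.
Proof. by move=> hs hdb; rewrite /double hs; have := hdb k; lia. Qed.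

Lemma canon_coord_step l da db i k : i < 2 * l -> k < l -> k != cpos l i ->
  canon_coord l da db i k = canon_coord l da db i.+1 k.
Proof.
rewrite cposE /canon_coord => hi hk /eqP hc.
case: (ltnP k (minn i (2 * l - i))) => h1.
  by rewrite (_ : k < minn i.+1 (2 * l - i.+1)) //; move: hc; case: ifP; lia.
rewrite (_ : k < minn i.+1 (2 * l - i.+1) = false); last by move: hc; case: ifP; lia.
case: (ltnP i l) => h2; last by rewrite (_ : i.+1 < l = false) //; lia.
by rewrite (_ : i.+1 < l) //; move: hc; case: ifP; lia.
Qed.

Lemma canon_step l da db i : i < 2 * l ->
  out_nbr l i (canon l da db i) (canon_coord l da db i.+1 (cpos l i)) = canon l da db i.+1.
Proof.
move=> hi; have hc := cpos_lt hi.
apply: (@eq_from_nth _ 0) => [|k]; first by rewrite /out_nbr size_set_nth !size_mkseq; lia.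
rewrite /out_nbr size_set_nth size_mkseq => hk; have hkl : k < l by lia.
rewrite nth_set_nth /= !nth_canon //.
by case: eqP => [->|/eqP hkc] //; apply: canon_coord_step.
Qed.

Lemma coord_pot_canon b l da db i : i < 2 * l ->
  coord_pot b l (double db) i (canon l da db i) =
  coord_pot b l (double db) i.+1 (canon l da db i.+1) +
  absdiff (canon_coord l da db i (cpos l i)) (canon_coord l da db i.+1 (cpos l i)) ^ 2.
Proof.
move=> hi; have hc := cpos_lt hi.
have := coord_pot_step b (double db) (canon l da db i) (canon_coord l da db i.+1 (cpos l i)) hi.
rewrite canon_step // nth_canon //.
suff : coord_cost b l i (cpos l i)
         (absdiff (canon_coord l da db i (cpos l i)) (double db (cpos l i))) =
       coord_cost b l i.+1 (cpos l i)
         (absdiff (canon_coord l da db i.+1 (cpos l i)) (double db (cpos l i))) +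
       absdiff (canon_coord l da db i (cpos l i)) (canon_coord l da db i.+1 (cpos l i)) ^ 2.
  by lia.
case: (ltnP i l) => h.
- have -> : cpos l i = i by rewrite cposE h.
  rewrite /double /canon_coord h (_ : i < minn i (2 * l - i) = false); last lia.
  rewrite (_ : i < minn i.+1 (2 * l - i.+1)); last lia.
  by rewrite coord_cost_twice ?coord_cost_once -?ltnNge ?two_steps_midpoint //; lia.
- have -> : cpos l i = 2 * l - i - 1 by rewrite cposE ltnNge h.
  rewrite /double /canon_coord (_ : i < l = false); last lia.
  rewrite (_ : 2 * l - i - 1 < minn i (2 * l - i)); last lia.
  rewrite (_ : 2 * l - i - 1 < minn i.+1 (2 * l - i.+1) = false); last lia.
  rewrite (_ : i.+1 < l = false); last lia.
  rewrite coord_cost_once ?coord_cost_settled -?ltnNge; try lia.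
  by rewrite /absdiff subnn eqxx muln0.
Qed.

(* In the first half, leaving the canonical path costs at least one extra
   unit: any step of coordinate i other than to the midpoint loses 2. *)
Lemma coord_pot_canon_strict b l da db i t : i < l ->
  coord_pot b l (double db) i (canon l da db i) + 1 <=
  coord_pot b l (double db) i.+1 (out_nbr l i (canon l da db i) t) +
  absdiff (nth 0 (canon l da db i) (cpos l i)) t ^ 2 +
  (out_nbr l i (canon l da db i) t == canon l da db i.+1).
Proof.
move=> hil; have hi : i < 2 * l by lia.
have hc := cpos_lt hi.
have ec : cpos l i = i by rewrite cposE hil.
have := coord_pot_step b (double db) (canon l da db i) t hi.
rewrite nth_canon // ec.
have -> : canon_coord l da db i i = 2 * da i.
  by rewrite /canon_coord (_ : i < minn i (2 * l - i) = false) ?hil //; lia.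
rewrite coord_cost_once ?coord_cost_twice -?ltnNge /double; try lia.
case: (eqVneq t (da i + db i)) => ht.
- have := canon_step da db hi; rewrite ec.
  rewrite {1}/canon_coord (_ : i < minn i.+1 (2 * l - i.+1)); last lia.
  by rewrite -ht => ->; rewrite eqxx ht two_steps_midpoint; lia.
- by have := two_steps_off_midpoint ht; lia.
Qed.

Lemma dist_est_target b l da db : dist_est b l (double db) (2 * l) (canon l da db (2 * l)) = 0.
Proof.
rewrite /dist_est subnn mul0n add0n /coord_pot big1 // => k _.
have e1 : (k < minn (2 * l) (2 * l - 2 * l)) = false by lia.
have e2 : (2 * l < l) = false by lia.
by rewrite nth_canon // /canon_coord /coord_cost e1 e2 /double /absdiff subnn muln0.
Qed.

Section CanonicalDistance.
Variables (b l h : nat) (D : seq nat -> bool) (da db : nat -> nat).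
Hypotheses (hl : 1 <= l) (hs : sz b = 2 * h).
Hypotheses (hda : forall k, da k < h) (hdb : forall k, db k < h).
Local Notation J := (canon l da db).
Local Notation T := (dist_est b l (double db) 0 (J 0)).
Local Notation adjD := (GD_adj b l D).

Lemma canon_dist_lb k : reach adjD k (Main 0 (J 0)) (Main (2 * l) (J (2 * l))) -> T <= k.
Proof.
move=> hr; have hQ c : c < l -> double db c < sz b by move=> _; apply: double_lt hs hdb.
pose mn i j := dist_est b l (double db) i j + 0.
have compat : edge_compatible b l mn mn.
  rewrite /mn; apply: (@dist_est_compatible b l (double db) (fun _ _ => 0) (fun _ _ => 0)
    hl hQ) => // i j t hi hj ht.
  by rewrite !addn0; apply: coord_pot_edge hQ.
have := reach_potential (Phi_lipschitz compat (fun i j _ => conj erefl erefl)) hr.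
by rewrite /= /mn dist_est_target !addn0.
Qed.

(* When the middle vertex is deleted, raise by 1 the calibrations of the
   first-half vertices of the canonical path (and of the middle vertex on
   its in-tree side): the potential stays 1-Lipschitz on G_D. *)
Lemma canon_dist_lb_deleted k : D (J l) ->
  reach adjD k (Main 0 (J 0)) (Main (2 * l) (J (2 * l))) -> T + 1 <= k.
Proof.
move=> hD hr.
pose e_out i j := ((i < l) && (j == J i) : nat).
pose e_in i j := ((i <= l) && (j == J i) : nat).
pose bo i j := dist_est b l (double db) i j + e_out i j.
pose bi i j := dist_est b l (double db) i j + e_in i j.
have hQ c : c < l -> double db c < sz b by move=> _; apply: double_lt hs hdb.
have compat : edge_compatible b l bi bo.
  rewrite /bi /bo; apply: (@dist_est_compatible b l (double db) e_in e_out hl hQ)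
    => // [i j|i j|i j t hi hj ht].
  - by rewrite /e_in; case: (_ && _).
  - by rewrite /e_out; case: (_ && _).
  rewrite /e_out /e_in; have := coord_pot_edge hi hj ht hQ.
  case: (ltnP i l) => hil /=; last by lia.
  case: eqP => [->|_] /=; first by move=> _; apply: coord_pot_canon_strict.
  by lia.
have hmain : forall i j, present b l D (Main i j) -> bi i j = bo i j /\ bo i j = bo i j.
  move=> i j [_ /= hp]; split=> //; rewrite /bi /bo /e_out /e_in.
  case: (ltngtP i l) => hil //=; subst i.
  by case: eqP => [ej|] //=; move: hp; rewrite eqxx ej hD.
have := reach_potential (Phi_lipschitz compat hmain) hr.
rewrite /= /bo /e_out dist_est_target eqxx hl /= (_ : 2 * l < l = false) /=; last lia.
lia.
Qed.

Lemma canon_walk : 1 <= b -> D (J l) = false ->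
  reach adjD T (Main 0 (J 0)) (Main (2 * l) (J (2 * l))).
Proof.
move=> hb hD.
have hJ i : is_vec b l (J i) := canon_vec l i hs hda hdb.
have kept i : i <= 2 * l -> present b l D (Main i (J i)).
  by move=> hi; split=> //; case: eqP => [->|] //=; rewrite hD.
suff walk_from n : n <= 2 * l ->
    reach adjD (dist_est b l (double db) (2 * l - n) (J (2 * l - n)))
      (Main (2 * l - n) (J (2 * l - n))) (Main (2 * l) (J (2 * l))).
  by have := walk_from (2 * l) (leqnn _); rewrite subnn.
elim: n => [|n IH] hn; first by rewrite subn0 dist_est_target; apply: reach0.
set i := 2 * l - n.+1.
have hi : i < 2 * l by rewrite /i; lia.
have ei : i.+1 = 2 * l - n by rewrite /i; lia.
set t := canon_coord l da db i.+1 (cpos l i).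
have ht : t < sz b by have := vec_nth (hJ i.+1) (cpos_lt hi); rewrite nth_canon // cpos_lt.
have [f1 [f2 f3]] := weight_facts b hl.
have hw : 2 * b + 2 < H_w b l i (J i) (out_nbr l i (J i) t) by rewrite H_w_out_nbr f2; lia.
have := H_edge_walk hi (hJ i) ht hw (kept i (ltnW hi)).
rewrite canon_step // ei => /(_ (kept _ (leq_subr _ _))) step.
have := reach_cat step (IH (ltnW hn)); rewrite -ei.
suff -> : H_w b l i (J i) (J i.+1) + dist_est b l (double db) i.+1 (J i.+1) =
          dist_est b l (double db) i (J i) by [].
rewrite /dist_est (levels_left_step (AA b l) hi) (coord_pot_canon b da db hi) /H_w !nth_canon ?cpos_lt //.
lia.
Qed.

Lemma canon_dist d : 1 <= b ->
  dist_is adjD (Main 0 (J 0)) (Main (2 * l) (J (2 * l))) d ->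
  (d == Some T) = ~~ D (J l).
Proof.
move=> hb; case hmid: (D (J l)) => /=.
- case: d => [n [hr _]|//] /=; apply/eqP => [[hn]].
  by have := canon_dist_lb_deleted hmid hr; lia.
- have hw := canon_walk hb hmid.
  case: d => [n [hr hmin]|hnone] /=; last by case: (hnone _ hw).
  by apply/eqP; congr Some; have := hmin _ hw; have := canon_dist_lb hr; lia.
Qed.

End CanonicalDistance.

Definition dig (h a k : nat) : nat := a %/ h ^ k %% h.

Lemma dig_lt h a k : 0 < h -> dig h a k < h.
Proof. by move=> hh; rewrite /dig ltn_mod. Qed.

Lemma dig_sum h n a : 0 < h -> a < h ^ n -> \sum_(k < n) dig h a k * h ^ k = a.
Proof.
move=> hh; elim: n a => [|n IH] a ha; first by rewrite big_ord0; move: ha; rewrite expn0; lia.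
rewrite big_ord_recl /= /dig expn0 divn1 muln1.
have -> : \sum_(i < n) a %/ h ^ bump 0 i %% h * h ^ bump 0 i =
          (\sum_(i < n) dig h (a %/ h) i * h ^ i) * h.
  rewrite big_distrl /=; apply: eq_bigr => k _.
  by rewrite /dig /bump /= add1n expnS divnMA [h * _]mulnC mulnA.
by rewrite IH ?ltn_divLR // -?expnSr // addnC -divn_eq.
Qed.

Definition enc (n a : nat) : seq bool := mkseq (fun i => odd (a %/ 2 ^ i)) n.
Definition dec (bs : seq bool) : nat := \sum_(i < size bs) nth false bs i * 2 ^ i.

Lemma dec_enc n a : a < 2 ^ n -> dec (enc n a) = a.
Proof.
move=> ha; rewrite /dec /enc size_mkseq -{2}(@dig_sum 2 n a) //.
by apply: eq_bigr => k _; rewrite nth_mkseq // /dig modn2.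
Qed.

Lemma size_enc n a : size (enc n a) = n.
Proof. exact: size_mkseq. Qed.

Lemma SumIndex_min n k : SumIndex_le n k -> SumIndex n <= k.
Proof.
move=> hk; rewrite /SumIndex; case: ex_minnP => k0 _; apply.
by rewrite /SumIndex_leb; case: excluded_middle_informative.
Qed.

(* With h = s/2 and m = h^l, a number a < m is the vertex
   P(a) = 2 (digits of a) of V_0 (or of V_{2l}), and a string S is encoded
   by the graph of F_{b,l} deleting v_{l,y} exactly when S is 0 at position
   (sum_k y_k h^k) mod m.  The middle of the canonical path from P(a) to
   P(b') is the digit-wise sum, which sits at position (a + b') mod m. *)
Definition del_of (b l : nat) (S : seq bool) (y : seq nat) : bool :=
  ~~ nth false S ((\sum_(k < l) nth 0 y k * (2 ^ (b - 1)) ^ k) %% 2 ^ ((b - 1) * l)).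

Definition point_of (b l a : nat) : seq nat := mkseq (fun k => 2 * dig (2 ^ (b - 1)) a k) l.

Definition target_dist (b l a b' : nat) : nat :=
  dist_est b l (double (dig (2 ^ (b - 1)) b')) 0 (point_of b l a).

Definition alice (b l : nat) (L : (seq nat -> bool) -> vtx -> seq bool)
  (S : seq bool) (a : nat) : seq bool :=
  enc ((b - 1) * l) a ++ L (del_of b l S) (Main 0 (point_of b l a)).

Definition bob (b l : nat) (L : (seq nat -> bool) -> vtx -> seq bool)
  (S : seq bool) (b' : nat) : seq bool :=
  enc ((b - 1) * l) b' ++ L (del_of b l S) (Main (2 * l) (point_of b l b')).

Definition referee (b l : nat) (f : seq bool -> seq bool -> option nat)
  (ma mb : seq bool) : bool :=
  let w := (b - 1) * l in
  f (drop w ma) (drop w mb) == Some (target_dist b l (dec (take w ma)) (dec (take w mb))).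

Section Reduction.
Variables (b l : nat) (f : seq bool -> seq bool -> option nat).
Variable (L : (seq nat -> bool) -> vtx -> seq bool).
Hypotheses (hb : 1 <= b) (hl : 1 <= l) (hdls : dls_for_F b l f L).
Local Notation h := (2 ^ (b - 1)).
Local Notation m := (2 ^ ((b - 1) * l)).

Lemma sz_half : sz b = 2 * h.
Proof. by rewrite /sz -expnS; congr (2 ^ _); lia. Qed.

Lemma h_gt0 : 0 < h.
Proof. by rewrite expn_gt0. Qed.

Lemma canon_start a b' : canon l (dig h a) (dig h b') 0 = point_of b l a.
Proof.
apply: eq_mkseq => k.
by rewrite /canon_coord (_ : k < minn 0 (2 * l - 0) = false) ?hl //; lia.
Qed.

Lemma canon_end a b' : canon l (dig h a) (dig h b') (2 * l) = point_of b l b'.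
Proof.
apply: eq_mkseq => k.
rewrite /canon_coord (_ : k < minn (2 * l) (2 * l - 2 * l) = false); last lia.
by rewrite (_ : 2 * l < l = false) //; lia.
Qed.

Lemma canon_middle S a b' : a < m -> b' < m ->
  del_of b l S (canon l (dig h a) (dig h b') l) = ~~ nth false S ((a + b') %% m).
Proof.
move=> ha hb'; rewrite /del_of; congr (~~ nth _ _ (_ %% _)).
have hm : m = h ^ l by rewrite expnM.
transitivity (\sum_(k < l) (dig h a k * h ^ k + dig h b' k * h ^ k)).
  apply: eq_bigr => k _; have hk := ltn_ord k.
  by rewrite nth_canon // /canon_coord (_ : k < minn l (2 * l - l)) ?mulnDl //; lia.
by rewrite big_split /= !dig_sum -?hm //; apply: h_gt0.
Qed.

Lemma point_kept S a i : i \in [:: 0; 2 * l] -> present b l (del_of b l S) (Main i (point_of b l a)).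
Proof.
have hv : is_vec b l (point_of b l a).
  by rewrite -(canon_start a 0); apply: canon_vec sz_half _ _ => k; apply: dig_lt h_gt0.
by rewrite !inE => /orP[] /eqP ->; do !split => //; lia.
Qed.

Lemma protocol_correct : SI_correct m (alice b l L) (bob b l L) (referee b l f).
Proof.
move=> S a b' hS ha hb'.
rewrite /referee /alice /bob !take_size_cat ?size_enc // !drop_size_cat ?size_enc // !dec_enc //.
have kept_end : present b l (del_of b l S) (Main (2 * l) (point_of b l b')).
  by apply: point_kept; rewrite !inE eqxx orbT.
have hd := hdls (point_kept S a (mem_head _ _)) kept_end.
rewrite -(canon_start a b') -(canon_end a b') in hd.
rewrite /target_dist -(canon_start a b') -(canon_end a b').
rewrite (canon_dist hl sz_half _ _ hb hd) => [|k|k]; try exact: dig_lt h_gt0.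
by rewrite canon_middle // negbK.
Qed.

Lemma protocol_cost K : (forall D x, present b l D x -> size (L D x) <= K) ->
  SI_cost_le m (alice b l L) (bob b l L) ((b - 1) * l + K).
Proof.
move=> hK S a _ _; rewrite /alice /bob !size_cat !size_enc !leq_add2l.
by split; apply: hK; apply: point_kept; rewrite !inE eqxx ?orbT.
Qed.

Lemma SumIndex_le_labels K : (forall D x, present b l D x -> size (L D x) <= K) ->
  SumIndex m <= (b - 1) * l + K.
Proof.
move=> hK; apply: SumIndex_min.
exists (alice b l L), (bob b l L), (referee b l f).
by split; [exact: protocol_correct | exact: protocol_cost].
Qed.

End Reduction.

Theorem mainTheorem8 (b l : nat) (hb : 1 <= b) (hl : 1 <= l)
  (f : seq bool -> seq bool -> option nat)
  (L : (seq nat -> bool) -> vtx -> seq bool) :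
  dls_for_F b l f L ->
  exists (D : seq nat -> bool) (x : vtx),
    present b l D x /\
    SumIndex (2 ^ ((b - 1) * l)) - b * l <= size (L D x).
Proof.
move=> hdls; apply: NNPP => hne; set SI := SumIndex _ in hne.
have hsmall D x : present b l D x -> size (L D x) < SI - b * l.
  by move=> px; rewrite ltnNge; apply/negP => hle; apply: hne; exists D, x.
have hpos : b * l < SI.
  by have := hsmall _ _ (point_kept hb hl [::] 0 (mem_head _ _)); lia.
have hK D x : present b l D x -> size (L D x) <= SI - b * l - 1.
  by move=> px; have := hsmall D x px; lia.
have hw : (b - 1) * l <= b * l by rewrite leq_mul2r leq_subr orbT.
by have := SumIndex_le_labels hb hl hdls hK; rewrite -/SI; lia.
Qed.
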